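(* Let $X$ be a spherically complete sequence class and $E$ a Banach space. Then $$\|(x_j)_{j=1}^\infty\|_{X^{\rm dual}(E)} := \sup_{(\varphi_j)_{j=1}^\infty\in B_{X(E')}}\sum_{j=1}^\infty|\varphi_j(x_j)|$$ is finite for every $(x_j)_{j=1}^\infty\in X^{\rm dual}(E)$ and defines a complete norm on $X^{\rm dual}(E)$; moreover $X^{\rm dual}(E)\subseteq \ell_\infty(E)$ with $\|(x_j)_{j=1}^\infty\|_\infty \le \|(x_j)_{j=1}^\infty\|_{X^{\rm dual}(E)}$ for all $(x_j)_{j=1}^\infty\in X^{\rm dual}(E)$.
   Context: Banach spaces are over $\mathbb{K}=\mathbb{R}$ or $\mathbb{C}$; $E'$ is the dual, $B_Z$ the closed unit ball. For $x\in E$, $j\in\mathbb{N}$, $x\cdot e_j$ is the sequence with $x$ in coordinate $j$ and $0$ elsewhere; $c_{00}(E)$ = finitely supported $E$-valued sequences; $\ell_\infty(E)$ = bounded sequences with sup norm. A sequence class is a rule $X$ assigning to each Banach space $E$ a Banach space $X(E)$ which is a linear subspace of $E^{\mathbb{N}}$ such that $c_{00}(E)\subseteq X(E)\subseteq\ell_\infty(E)$ with $\|\cdot\|_\infty\le\|\cdot\|_{X(E)}$, and $\|x\cdot e_j\|_{X(E)}=\|x\|$ for all $x,j$. $X$ is spherically complete if $(x_j)\in X(E)$ and $|\lambda_j|=1$ for all $j$ imply $(\lambda_jx_j)\in X(E)$ with the same norm. The dual of $X$ is the rule $X^{\rm dual}(E)=\{(x_j)_{j=1}^\infty\in E^{\mathbb{N}}: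 \sum_{j=1}^\infty\varphi_j(x_j)\text{ converges for every }(\varphi_j)_{j=1}^\infty\in X(E')\}$. *)

From HB Require Import structures.
From mathcomp Require Import all_boot all_order all_algebra.
From mathcomp Require Import complex.
From mathcomp Require Import all_classical all_reals all_analysis.



Unset Printing Implicit Defensive.

Import Order.TTheory GRing.Theory Num.Theory.
Import numFieldNormedType.Exports.

Local Open Scope classical_set_scope.
Local Open Scope ring_scope.

Definition scal (R : realType) (b : bool) : numFieldType :=
  if b then (R[i] : numFieldType) else (R : numFieldType).

Section Defs.
Context {K : numFieldType}.

(** [s] is the least upper bound of the set [A] of scalars (all norms and
    sums of absolute values below are (real) nonnegative elements of [K]). *)
Definition is_lub (A : set K) (s : K) : Prop :=
  (forall a, A a -> a <= s) /\ (forall t, (forall a, A a -> a <= t) -> s <= t).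

Definition c00 {E : normedModType K} : set (nat -> E) :=
  [set x | exists N, forall n, (N <= n)%N -> x n = 0].

Definition single {E : normedModType K} (x : E) (j : nat) : nat -> E :=
  fun n => if n == j then x else 0.

Definition banach_subspace {E : normedModType K}
    (S : set (nat -> E)) (N : (nat -> E) -> K) : Prop :=
  S (fun _ => 0) /\
  (forall x y, S x -> S y -> S (fun j => x j + y j)) /\
  (forall (a : K) x, S x -> S (fun j => a *: x j)) /\
  (forall x, S x -> 0 <= N x) /\
  (forall x, S x -> N x = 0 -> x = (fun _ => 0)) /\
  (forall x y, S x -> S y -> N (fun j => x j + y j) <= N x + N y) /\
  (forall (a : K) x, S x -> N (fun j => a *: x j) = `|a| * N x) /\
  (forall s : nat -> (nat -> E), (forall n, S (s n)) ->
     (forall e : K, 0 < e -> exists M, forall m n, (M <= m)%N -> (M <= n)%N ->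
          N (fun j => s m j - s n j) < e) ->
     exists2 y, S y & forall e : K, 0 < e -> exists M, forall n, (M <= n)%N ->
          N (fun j => s n j - y j) < e).

End Defs.

Definition seq_class_carrier (K : numFieldType) :=
  forall E : completeNormedModType K, set (nat -> E).
Definition seq_class_norm (K : numFieldType) :=
  forall E : completeNormedModType K, (nat -> E) -> K.

Definition is_sequence_class {K : numFieldType}
    (X : seq_class_carrier K) (Xn : seq_class_norm K) : Prop :=
  forall E : completeNormedModType K,
    [/\ banach_subspace (X E) (Xn E),
        c00 `<=` X E,
        (forall x, X E x -> forall j, `|x j| <= Xn E x) &
        (forall (x : E) (j : nat), Xn E (single x j) = `|x|)].

Definition spherically_complete {K : numFieldType}
    (X : seq_class_carrier K) (Xn : seq_class_norm K) : Prop :=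
  forall (E : completeNormedModType K) (x : nat -> E) (l : nat -> K),
    X E x -> (forall j, `|l j| = 1) ->
    X E (fun j => l j *: x j) /\ Xn E (fun j => l j *: x j) = Xn E x.

(** [(D, ev)] is (an isometric copy of) the dual [E'] of [E]: [ev d] is a
    linear functional on [E], [ev] is linear in [d], [`|d|] is the operator
    norm of [ev d], and every continuous linear functional on [E] is some
    [ev d]. *)
Definition is_dual {K : numFieldType} {E D : completeNormedModType K}
    (ev : D -> E -> K) : Prop :=
  [/\ (forall d (a : K) x y, ev d (a *: x + y) = a * ev d x + ev d y),
      (forall (a : K) d d' x, ev (a *: d + d') x = a * ev d x + ev d' x),
      (forall d, is_lub [set `|ev d x| | x in [set x : E | `|x| <= 1]] `|d|) &
      (forall f : E -> K, (forall (a : K) x y, f (a *: x + y) = a * f x + f y) ->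
         continuous f -> exists d, forall x, ev d x = f x)].

Section Dual.
Context {K : numFieldType} (X : seq_class_carrier K) (Xn : seq_class_norm K)
  {E D : completeNormedModType K} (ev : D -> E -> K).

Definition Xdual : set (nat -> E) :=
  [set x | forall phi : nat -> D, X D phi ->
     cvgn (series (fun j => ev (phi j) (x j)))].

Definition dual_sums (x : nat -> E) : set K :=
  [set limn (series (fun j => `|ev (phi j) (x j)|)) |
     phi in [set phi : nat -> D | X D phi /\ Xn D phi <= 1]].

(** [|| x ||_{X^dual(E)}] := sup of [dual_sums x] (and [0] if that sup
    does not exist; the theorem shows it always exists on [X^dual(E)]). *)
Definition dual_norm (x : nat -> E) : K :=
  match pselect (exists s, is_lub (dual_sums x) s) with
  | left h => projT1 (cid h)
  | right _ => 0
  end.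

End Dual.

From HB Require Import structures.
From mathcomp Require Import all_boot all_order all_algebra.
From mathcomp Require Import complex.
From mathcomp Require Import all_classical all_reals all_analysis.
From mathcomp Require Import ring lra.
Import Order.TTheory GRing.Theory Num.Theory.
Import numFieldNormedType.Exports.
Local Open Scope classical_set_scope.
Local Open Scope ring_scope.

(** The argument is carried out once for any scalar field [K] whose norm is
    real-valued ([|z| = emb (nR z)] for an order embedding [emb] of the reals):
    - spherical completeness makes every pairing [sum_j phi_j(x_j)] absolutely
      convergent, by rotating each [phi_j] by the phase of [phi_j(x_j)];
    - a uniform boundedness principle for continuous seminorms on the Banach
      space [X(E')], proved with Cantor's nested-ball theorem, shows that the
      supremum defining the norm is finite;
    - Hahn-Banach (proved by Zorn's lemma for real scalars and extended to
      complex ones by complexification) yields norming functionals, hence the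
      embedding into [l_infty(E)], definiteness, and coordinatewise limits of
      Cauchy sequences, from which completeness follows.
    The theorem is the case split between [K = R] and [K = R[i]]. *)

(** Hahn-Banach for a real vector space, presented as an additive group [V]
    with a scalar action [sc] of [R] (so that it also applies to a complex
    normed space viewed as a real one), and a seminorm [p] on it. *)
Section RealHahnBanach.
Variables (R : realType) (V : zmodType) (sc : R -> V -> V).
Hypotheses (scDr : forall r x y, sc r (x + y) = sc r x + sc r y)
  (scDl : forall r s x, sc (r + s) x = sc r x + sc s x)
  (scA : forall r s x, sc r (sc s x) = sc (r * s) x)
  (sc1 : forall x, sc 1 x = x).
Variable p : V -> R.
Hypotheses (pD : forall x y, p (x + y) <= p x + p y)
  (pZ : forall r x, p (sc r x) = `|r| * p x).

Lemma sc0 x : sc 0 x = 0.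
Proof. by apply: (addrI (sc 0 x)); rewrite -scDl !addr0. Qed.

Lemma scr0 r : sc r 0 = 0.
Proof. by apply: (addrI (sc r 0)); rewrite -scDr !addr0. Qed.

Lemma scNr r x : sc (- r) x = - sc r x.
Proof. by apply: (addrI (sc r x)); rewrite -scDl !subrr sc0. Qed.

Lemma scrN r x : sc r (- x) = - sc r x.
Proof. by apply: (addrI (sc r x)); rewrite -scDr !subrr scr0. Qed.

Lemma scN1 x : sc (-1) x = - x.
Proof. by rewrite scNr sc1. Qed.

Lemma p0 : p 0 = 0.
Proof. by rewrite -(sc0 0) pZ normr0 mul0r. Qed.

Lemma p_ge0 x : 0 <= p x.
Proof.
have pN : p (- x) = p x by rewrite -scN1 pZ normrN normr1 mul1r.
have := pD x (- x); rewrite subrr p0 pN => h.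
by rewrite -(@pmulr_rge0 _ 2) // mulr2n mulrDl mul1r.
Qed.

(** [G] is the graph of a linear functional, defined on a subspace of [V]
    and dominated by [p]. *)
Definition dominated_graph (G : set (V * R)) :=
  [/\ forall x a b, G (x, a) -> G (x, b) -> a = b,
      forall x a y c, G (x, a) -> G (y, c) -> G (x + y, a + c),
      forall r x a, G (x, a) -> G (sc r x, r * a) &
      forall x a, G (x, a) -> a <= p x].

Variable x0 : V.

(** The candidates for Zorn's lemma: dominated graphs taking the value
    [p x0] at [x0]; the empty graph is allowed so that the union of the
    empty chain is a candidate. *)
Definition candidate (G : set (V * R)) :=
  dominated_graph G /\ (G = set0 \/ G (x0, p x0)).

Lemma candidate_chain (F : set (set (V * R))) :
  F `<=` candidate -> total_on F subset -> candidate (\bigcup_(G in F) G).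
Proof.
move=> FP Ftot.
have common G1 G2 z1 z2 : F G1 -> F G2 -> G1 z1 -> G2 z2 ->
    exists G, [/\ F G, G z1 & G z2].
  move=> F1 F2 h1 h2; case: (Ftot _ _ F1 F2) => sub.
    by exists G2; split => //; apply: sub.
  by exists G1; split => //; apply: sub.
split; [split|].
- move=> x a b [G1 F1 h1] [G2 F2 h2].
  have [G [FG g1 g2]] := common _ _ _ _ F1 F2 h1 h2.
  by have [[fu _ _ _] _] := FP _ FG; exact: fu g1 g2.
- move=> x a y c [G1 F1 h1] [G2 F2 h2].
  have [G [FG g1 g2]] := common _ _ _ _ F1 F2 h1 h2.
  by have [[_ ad _ _] _] := FP _ FG; exists G => //; exact: ad.
- move=> r x a [G1 F1 h1]; have [[_ _ sc' _] _] := FP _ F1.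
  by exists G1 => //; exact: sc'.
- by move=> x a [G1 F1 h1]; have [[_ _ _ dm] _] := FP _ F1; exact: dm.
case: (pselect (exists2 G, F G & G (x0, p x0))) => [[G FG hG]|nG].
  by right; exists G.
left; apply/seteqP; split => // z [G FG hG].
have [_ [G0|hx]] := FP _ FG; first by rewrite G0 in hG.
by exfalso; apply: nG; exists G.
Qed.

Definition line_graph : set (V * R) := [set z | exists r, z = (sc r x0, r * p x0)].

Lemma line_graph_dominated : dominated_graph line_graph.
Proof.
split.
- move=> x a b [r [-> ->]] [s [e ->]].
  have [->|rs] := eqVneq r s; first by [].
  have x00 : x0 = 0.
    have h : sc (r - s) x0 = 0 by rewrite scDl scNr e subrr.
    rewrite -(sc1 x0) -(@divff _ (r - s)) ?subr_eq0 //.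
    by rewrite mulrC -scA h scr0.
  by rewrite x00 p0 !mulr0.
- by move=> x a y c [r [-> ->]] [s [-> ->]]; exists (r + s); rewrite scDl mulrDl.
- by move=> t x a [r [-> ->]]; exists (t * r); rewrite scA mulrA.
- move=> x a [r [-> ->]]; rewrite pZ; apply: ler_wpM2r; first exact: p_ge0.
  exact: ler_norm.
Qed.

Section OneStepExtension.
Variables (A : set (V * R)) (v : V).
Hypotheses (domA : dominated_graph A) (A00 : A (0, 0))
  (v_out : forall a, ~ A (v, a)).

Definition ext_graph (c : R) : set (V * R) :=
  [set z | exists m a t, A (m, a) /\ z = (m + sc t v, a + t * c)].

(** The admissible values [c] at [v] are those between the two bounds
    forced by domination; they form a nonempty interval. *)
Lemma ext_slope : exists c,
  (forall m a, A (m, a) -> a - p (m - v) <= c) /\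
  (forall m a, A (m, a) -> c <= p (m + v) - a).
Proof.
have [_ adA _ dmA] := domA.
pose S := [set t | exists m a, A (m, a) /\ t = a - p (m - v)].
have S_ub m' a' : A (m', a') -> ubound S (p (m' + v) - a').
  move=> h' _ [m [a [h ->]]].
  rewrite lerBrDr addrAC lerBlDr.
  apply: (le_trans (dmA _ _ (adA _ _ _ _ h h'))).
  rewrite (_ : m + m' = (m - v) + (m' + v)); first by rewrite addrC pD.
  by rewrite addrACA addNr addr0.
have S_sup : has_sup S.
  by split; [exists (0 - p (0 - v)), 0, 0 | exists (p (0 + v) - 0); exact: S_ub].
exists (sup S); split => [m a h|m a h].
  by apply: sup_upper_bound => //; exists m, a.
by apply: ge_sup => //; [case: S_sup|exact: S_ub].
Qed.

Variable c : R.
Hypotheses (c_lb : forall m a, A (m, a) -> a - p (m - v) <= c)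
  (c_ub : forall m a, A (m, a) -> c <= p (m + v) - a).

(** Domination of the extension: for [t > 0] use the upper bound on [c]
    at [m / t], for [t < 0] the lower bound at [m / (-t)]. *)
Lemma ext_graph_le m a t : A (m, a) -> a + t * c <= p (m + sc t v).
Proof.
have [_ _ scA' dmA] := domA => h1.
have [t0|t0|->] := ltgtP t 0; last by rewrite sc0 mul0r !addr0; exact: dmA.
- pose s := - t; have s0 : 0 < s by rewrite oppr_gt0.
  have h := c_lb _ _ (scA' s^-1 _ _ h1).
  have -> : m + sc t v = sc s (sc s^-1 m - v).
    by rewrite scDr scA mulfV ?gt_eqF // sc1 scrN /s scNr opprK.
  rewrite pZ gtr0_norm //.
  have : s * (s^-1 * a - p (sc s^-1 m - v)) <= s * c by rewrite ler_pM2l.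
  rewrite mulrBr mulrA mulfV ?gt_eqF // mul1r /s mulNr => h'; lra.
- have h := c_ub _ _ (scA' t^-1 _ _ h1).
  have -> : m + sc t v = sc t (sc t^-1 m + v).
    by rewrite scDr scA mulfV ?gt_eqF // sc1.
  rewrite pZ gtr0_norm //.
  have : t * c <= t * (p (sc t^-1 m + v) - t^-1 * a) by rewrite ler_pM2l.
  rewrite mulrBr mulrA mulfV ?gt_eqF // mul1r => h'.
  by rewrite addrC -lerBrDr.
Qed.

Lemma ext_graph_dominated : dominated_graph (ext_graph c).
Proof.
have [fuA adA scA' _] := domA.
split.
- move=> x a b [m [a1 [t [h1 [-> ->]]]]] [m2 [a2 [t2 [h2 [e ->]]]]].
  have [tt|tt] := eqVneq t t2.
    by move: e; rewrite tt => /addIr em; rewrite em in h1; rewrite (fuA _ _ _ h1 h2).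
  (* two different slopes would put [v] in the domain of [A] *)
  exfalso; apply: (v_out ((t - t2)^-1 * (a2 - a1))).
  have e2 : sc t v - sc t2 v = m2 - m.
    by rewrite -(addKr m (sc t v)) e addrA addrK addrC.
  have ev : v = sc (t - t2)^-1 (m2 - m).
    rewrite -[in LHS](sc1 v) -(@mulVf _ (t - t2)) ?subr_eq0 //.
    by rewrite -scA scDl scNr e2.
  have hN := scA' (-1) _ _ h1; rewrite scN1 mulN1r in hN.
  by rewrite ev; apply: scA'; apply: adA.
- move=> x a y c' [m [a1 [t [h1 [-> ->]]]]] [m2 [a2 [t2 [h2 [-> ->]]]]].
  exists (m + m2), (a1 + a2), (t + t2); split; first exact: adA.
  by rewrite scDl mulrDl; congr (_, _); rewrite -!addrA; congr (_ + _); rewrite addrCA.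
- move=> r x a [m [a1 [t [h1 [-> ->]]]]].
  exists (sc r m), (r * a1), (r * t); split; first exact: scA'.
  by rewrite scDr scA mulrDr mulrA.
- by move=> x a [m [a1 [t [h1 [-> ->]]]]]; exact: ext_graph_le.
Qed.

End OneStepExtension.

Theorem real_hahn_banach : exists g : V -> R,
  [/\ (forall x y, g (x + y) = g x + g y), (forall r x, g (sc r x) = r * g x),
      (forall x, g x <= p x) & g x0 = p x0].
Proof.
have [A [[domA A0] maxA]] := Zorn_bigcup candidate_chain.
have [fuA adA scA' dmA] := domA.
have Ax0 : A (x0, p x0).
  case: A0 => // A0; exfalso; apply: (maxA line_graph).
    rewrite A0; split; first by [].
    by move=> /(_ (x0, p x0)); apply => //; exists 1; rewrite sc1 mul1r.
  by split; [exact: line_graph_dominated | right; exists 1; rewrite sc1 mul1r].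
have A00 : A (0, 0) by have := scA' 0 _ _ Ax0; rewrite sc0 mul0r.
(* by maximality, [A] is defined everywhere *)
have tot v : exists a, A (v, a).
  apply/not_existsP => v_out.
  have [c [c_lb c_ub]] := ext_slope A v domA A00.
  apply: (maxA (ext_graph A v c)); last first.
    split; first exact: ext_graph_dominated.
    by right; exists x0, (p x0), 0; rewrite sc0 mul0r !addr0.
  split.
    by move=> [m a] h; exists m, a, 0; rewrite sc0 mul0r !addr0.
  move=> sub; apply: (v_out c); apply: sub; exists 0, 0, 1.
  by rewrite sc1 add0r mul1r add0r.
pose g v := sval (cid (tot v)).
have Ag v : A (v, g v) by rewrite /g; case: cid.
exists g; split.
- by move=> x y; apply: (fuA _ _ _ (Ag _)); apply: adA.
- by move=> r x; apply: (fuA _ _ _ (Ag _)); apply: scA'.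
- by move=> x; apply: dmA.
- exact: (fuA _ _ _ (Ag _) Ax0).
Qed.

End RealHahnBanach.

Lemma seq_cauchy_cvg {F : numFieldType} {V : completeNormedModType F}
  (u : nat -> V) :
  (forall e : F, 0 < e -> exists N, forall n, (N <= n)%N -> `|u N - u n| < e) ->
  cvgn u.
Proof.
move=> h; apply/cauchy_cvgP/cauchy_exP => e e0.
have [N HN] := h e e0; exists (u N); exists N => // n Nn /=.
by rewrite -ball_normE /ball_ /=; exact: HN.
Qed.

Lemma nat_inv_lt {R : realType} (e : R) : 0 < e -> exists k : nat, k.+1%:R^-1 < e.
Proof.
move=> e0; exists (Num.truncn e^-1).
have := truncnS_gt e^-1; set m := _.+1%:R => h.
have m0 : 0 < m by rewrite /m ltr0n.
move: h; rewrite -[e^-1]mulr1 ltr_pdivrMl // => h.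
by rewrite -div1r ltr_pdivrMr // mulrC.
Qed.

(** Scalar fields [K] whose norm is real-valued: [R] order-embeds into [K]
    through the ring morphism [emb], and [|z| = emb (nR z)] for a real
    number [nR z]. Both [R] and [R[i]] are of this kind; all analysis is
    then done on the real numbers [nR z]. *)
Section RealValuedNorm.
Variables (R : realType) (K : numFieldType) (emb : {rmorphism R -> K}).
Hypothesis lee : forall r s : R, (emb r <= emb s) = (r <= s).
Variable nR : K -> R.
Hypothesis normE : forall z : K, `|z| = emb (nR z).

Lemma emb_inj : injective emb.
Proof. by move=> r s e; apply/le_anti; rewrite -!lee e lexx. Qed.

Lemma lte r s : (emb r < emb s) = (r < s).
Proof. by rewrite !lt_def (inj_eq emb_inj) lee. Qed.

Lemma emb_ge0 r : (0 <= emb r) = (0 <= r).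
Proof. by rewrite -(rmorph0 emb) lee. Qed.

Lemma emb_gt0 r : (0 < emb r) = (0 < r).
Proof. by rewrite -(rmorph0 emb) lte. Qed.

Lemma norm_emb r : `|emb r| = emb `|r|.
Proof.
have [r0|r0] := leP 0 r; first by rewrite !ger0_norm ?emb_ge0.
by rewrite !ltr0_norm ?rmorphN // -(rmorph0 emb) lte.
Qed.

Lemma nR_ge0 z : 0 <= nR z.
Proof. by rewrite -lee rmorph0 -normE. Qed.

Lemma nR_emb r : nR (emb r) = `|r|.
Proof. by apply: emb_inj; rewrite -normE norm_emb. Qed.

Lemma nR_norm z : nR `|z| = nR z.
Proof. by rewrite normE nR_emb ger0_norm // nR_ge0. Qed.

Lemma nRM z w : nR (z * w) = nR z * nR w.
Proof. by apply: emb_inj; rewrite rmorphM -!normE normrM. Qed.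

Lemma nRD z w : nR (z + w) <= nR z + nR w.
Proof. by rewrite -lee rmorphD -!normE ler_normD. Qed.

Lemma nRN z : nR (- z) = nR z.
Proof. by apply: emb_inj; rewrite -!normE normrN. Qed.

Lemma nR0 : nR 0 = 0.
Proof. by rewrite -(rmorph0 emb) nR_emb normr0. Qed.

Lemma nR_eq0 z : nR z = 0 -> z = 0.
Proof. by move=> h; apply/normr0_eq0; rewrite normE h rmorph0. Qed.

Lemma ge0_emb {z} : 0 <= z -> z = emb (nR z).
Proof. by move=> h; rewrite -normE ger0_norm. Qed.

Lemma nR_ler z (r : R) : (`|z| <= emb r) = (nR z <= r).
Proof. by rewrite normE lee. Qed.

Lemma nR_ltr z (r : R) : (`|z| < emb r) = (nR z < r).
Proof. by rewrite normE lte. Qed.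

Lemma nR_gt0 {z} : 0 < z -> 0 < nR z.
Proof. by move=> h; rewrite -emb_gt0 -ge0_emb // ltW. Qed.

Lemma normV {V : normedModType K} (v : V) : `|v| = emb (nR `|v|).
Proof. exact: ge0_emb (normr_ge0 v). Qed.

Lemma cvgVP {V : normedModType K} (u : nat -> V) l :
  u @ \oo --> l <-> forall e : R, 0 < e -> \forall n \near \oo, nR `|l - u n| < e.
Proof.
rewrite cvgrPdist_lt; split => h e e0.
  have e0' : 0 < emb e by rewrite emb_gt0.
  by apply: filterS (h _ e0') => n; rewrite -nR_ltr normr_id.
move: (h _ (nR_gt0 e0)); apply: filterS => n.
by rewrite -nR_ltr normr_id -ge0_emb // ltW.
Qed.

Lemma cvgKP (u : nat -> K) l :
  u @ \oo --> l <-> forall e : R, 0 < e -> \forall n \near \oo, nR (l - u n) < e.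
Proof.
by rewrite cvgVP; split => h e e0; apply: filterS (h _ e0) => n; rewrite nR_norm.
Qed.

Lemma emb_cvg {u : nat -> R} {l} : u @ \oo --> l -> (emb \o u) @ \oo --> emb l.
Proof.
move/cvgrPdist_lt => h; apply/cvgKP => e e0.
by apply: filterS (h _ e0) => n /=; rewrite -rmorphB nR_emb.
Qed.

Lemma emb_cvg_inv {u : nat -> R} {L} : (emb \o u) @ \oo --> L ->
  exists l, u @ \oo --> l /\ L = emb l.
Proof.
move=> h.
have cu : cvgn u.
  apply: seq_cauchy_cvg => e e0.
  have /cvgKP/(_ (e / 2)) := h; rewrite divr_gt0 // => /(_ isT) [N _ HN].
  exists N => n Nn.
  have h1 := HN _ (leqnn N); have h2 := HN _ Nn.
  rewrite -nR_emb rmorphB.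
  rewrite (_ : emb (u N) - emb (u n) = (L - emb (u n)) - (L - emb (u N))); last first.
    by rewrite opprB [RHS]addrC addrA subrK.
  apply: (le_lt_trans (nRD _ _)); rewrite nRN /= in h1 h2 *.
  by rewrite (splitr e) ltrD.
exists (limn u); split => //.
by apply: (cvg_unique (@norm_hausdorff _ _) h); apply: emb_cvg; exact: cu.
Qed.

Lemma emb_series (f : nat -> R) : series (emb \o f) = emb \o series f.
Proof. by apply/funext => n; rewrite /series /= rmorph_sum. Qed.

Lemma abs_cvg (Kcauchy : forall u : nat -> K, (forall e : R, 0 < e ->
      exists N, forall n, (N <= n)%N -> nR (u N - u n) < e) -> cvgn u)
  (w : nat -> K) :
  (exists C, forall k, series (fun j => nR (w j)) k <= C) -> cvgn (series w).
Proof.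
move=> [C hC]; set P := series (fun j => nR (w j)).
have Pnd : {homo P : n m / (n <= m)%N >-> n <= m}.
  by move=> n m nm; apply: nondecreasing_series => // k _ _; exact: nR_ge0.
have cP : cvgn P.
  by apply: nondecreasing_is_cvgn => //; exists C => _ [k _ <-]; exact: hC.
apply: Kcauchy => e e0.
have := cP; move/cvgrPdist_lt/(_ e e0) => [N _ hN].
exists N => n Nn.
have hn := hN N (leqnn N).
rewrite -nRN opprB sub_series Nn.
apply: (@le_lt_trans _ _ (P n - P N)).
  rewrite /P sub_series Nn -lee.
  rewrite -normE rmorph_sum; apply: (le_trans (ler_norm_sum _ _ _)).
  by apply: ler_sum => j _; rewrite normE.
have := nondecreasing_cvgn_le Pnd cP n.
move: hn; rewrite ger0_norm; last first.
  by rewrite subr_ge0; exact: nondecreasing_cvgn_le.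
lra.
Qed.

Definition bnorm {D : normedModType K} (N : (nat -> D) -> K) (f : nat -> D) : R :=
  nR (N f).
Definition bdist {D : normedModType K} (N : (nat -> D) -> K) (f g : nat -> D) : R :=
  bnorm N (fun j => f j - g j).

Section BanachSubspace.
Context {D : normedModType K} {S : set (nat -> D)} {N : (nat -> D) -> K}.
Hypothesis bs : banach_subspace S N.

Local Notation nrm := (bnorm N).
Local Notation dist := (bdist N).

Lemma bs_S0 : S (fun _ => 0). Proof. by case: bs. Qed.
Lemma bs_SD {f g} : S f -> S g -> S (fun j => f j + g j).
Proof. by case: bs => _ [h _]; exact: h. Qed.
Lemma bs_SZ a {f} : S f -> S (fun j => a *: f j).
Proof. by case: bs => _ [_ [h _]]; exact: h. Qed.
Lemma bs_N0 {f} : S f -> 0 <= N f.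
Proof. by case: bs => _ [_ [_ [h _]]]; exact: h. Qed.
Lemma bs_ND {f g} : S f -> S g -> N (fun j => f j + g j) <= N f + N g.
Proof. by case: bs => _ [_ [_ [_ [_ [h _]]]]]; exact: h. Qed.
Lemma bs_NZ a {f} : S f -> N (fun j => a *: f j) = `|a| * N f.
Proof. by case: bs => _ [_ [_ [_ [_ [_ [h _]]]]]]; exact: h. Qed.
Lemma bs_complete (s : nat -> (nat -> D)) : (forall n, S (s n)) ->
     (forall e : K, 0 < e -> exists M, forall m n, (M <= m)%N -> (M <= n)%N ->
          N (fun j => s m j - s n j) < e) ->
     exists2 y, S y & forall e : K, 0 < e -> exists M, forall n, (M <= n)%N ->
          N (fun j => s n j - y j) < e.
Proof. by case: bs => _ [_ [_ [_ [_ [_ [_ h]]]]]]; exact: h. Qed.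

Lemma bs_NS0 : N (fun _ => 0) = 0.
Proof.
have := bs_NZ 0 bs_S0; rewrite normr0 mul0r => <-.
by congr N; apply/funext => j; rewrite scale0r.
Qed.

Lemma bs_SN {f} : S f -> S (fun j => - f j).
Proof.
by move=> Sf; have := bs_SZ (-1) Sf; congr S; apply/funext => j; rewrite scaleN1r.
Qed.

Lemma bs_SB {f g} : S f -> S g -> S (fun j => f j - g j).
Proof. by move=> Sf Sg; apply: bs_SD => //; exact: bs_SN. Qed.

Lemma bs_Nemb {f} : S f -> N f = emb (nrm f).
Proof. by move=> Sf; apply: ge0_emb; exact: bs_N0. Qed.

Lemma bnorm_ge0 f : 0 <= nrm f.
Proof. exact: nR_ge0. Qed.

Lemma bnormN {f} : S f -> nrm (fun j => - f j) = nrm f.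
Proof.
move=> Sf; rewrite /bnorm; have := bs_NZ (-1) Sf.
rewrite normrN normr1 mul1r => <-.
by congr (nR (N _)); apply/funext => j; rewrite scaleN1r.
Qed.

Lemma bnormD {f g} : S f -> S g ->
  nrm (fun j => f j + g j) <= nrm f + nrm g.
Proof.
by move=> Sf Sg; rewrite -lee rmorphD -!bs_Nemb //; [exact: bs_ND|exact: bs_SD].
Qed.

Lemma bnormZ (t : R) {f} : S f -> nrm (fun j => emb t *: f j) = `|t| * nrm f.
Proof. by move=> Sf; rewrite /bnorm bs_NZ // nRM nR_norm nR_emb. Qed.

Lemma bdist_sym {f g} : S f -> S g -> dist f g = dist g f.
Proof.
move=> Sf Sg; rewrite /bdist -bnormN; last exact: bs_SB.
by congr nrm; apply/funext => j; rewrite opprB.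
Qed.

Lemma bdist_tri {f g h} : S f -> S g -> S h -> dist f g <= dist f h + dist h g.
Proof.
move=> Sf Sg Sh; have := bnormD (bs_SB Sf Sh) (bs_SB Sh Sg).
by congr (nrm _ <= _); apply/funext => j; rewrite addrA subrK.
Qed.

(** Cantor's intersection theorem: closed balls [B(a k, r k)] whose radii
    tend to [0], each centre lying in the previous ball at distance at most
    [r k - r k.+1] (so that the balls are nested), have a common point. *)
Lemma nested_balls (a : nat -> (nat -> D)) (r : nat -> R) :
  (forall k, S (a k)) -> (forall k, 0 <= r k) ->
  (forall k, dist (a k.+1) (a k) <= r k - r k.+1) ->
  (forall e, 0 < e -> exists k, r k < e) ->
  exists2 y, S y & forall k, dist y (a k) <= r k.
Proof.
move=> Sa r0 step rlim.
have nest k d : dist (a (k + d)%N) (a k) <= r k - r (k + d)%N.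
  elim: d => [|d IH].
    rewrite addn0 subrr /dist (_ : (fun j => _) = fun _ => 0) ?/nrm ?bs_NS0 ?nR0 //.
    by apply/funext => j; rewrite subrr.
  rewrite addnS; apply: le_trans (bdist_tri (Sa _) (Sa _) (Sa (k + d)%N)) _.
  by have := step (k + d)%N; lra.
have nest_le k m : (k <= m)%N -> dist (a m) (a k) <= r k - r m.
  by move=> km; have := nest k (m - k)%N; rewrite subnKC.
have a_cauchy : forall e : K, 0 < e -> exists M, forall m n,
    (M <= m)%N -> (M <= n)%N -> N (fun j => a m j - a n j) < e.
  move=> e e0; have [k rk] := rlim _ (nR_gt0 e0); exists k => m n km kn.
  rewrite (bs_Nemb (bs_SB (Sa m) (Sa n))) (ge0_emb (ltW e0)) lte -/(dist _ _).
  have := bnorm_ge0 (fun j => a n j - a k j).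
  have := bnorm_ge0 (fun j => a m j - a k j); rewrite -!/(dist _ _) => d0 d0'.
  have [mn|nm] := leqP n m.
    have := nest_le _ _ mn; have := nest_le _ _ kn; have := r0 m; lra.
  rewrite bdist_sym //.
  have := nest_le _ _ (ltnW nm); have := nest_le _ _ km; have := r0 n; lra.
have [y Sy cy] := bs_complete a Sa a_cauchy.
exists y => // k; apply/ler_addgt0Pr => e e0.
have e0' : 0 < emb e by rewrite emb_gt0.
have [M hM] := cy (emb e) e0'.
pose m := maxn M k.
have h1 := hM m (leq_maxl _ _).
rewrite (bs_Nemb (bs_SB (Sa m) Sy)) lte -/(dist _ _) (bdist_sym (Sa m) Sy) in h1.
have := nest_le _ _ (leq_maxr M k); have := bdist_tri Sy (Sa k) (Sa m).
have := r0 m; lra.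
Qed.

Section UniformBoundedness.
Variables (p : nat -> (nat -> D) -> R) (c : nat -> R).
Hypotheses
  (pD : forall n f g, S f -> S g -> p n (fun j => f j + g j) <= p n f + p n g)
  (pN : forall n f, S f -> p n (fun j => - f j) = p n f)
  (pZ : forall n (t : R) f, S f -> p n (fun j => emb t *: f j) = `|t| * p n f)
  (pc : forall n f, S f -> p n f <= c n * nrm f).

Lemma p_lipschitz n f g : S f -> S g -> p n f <= p n g + `|c n| * dist f g.
Proof.
move=> Sf Sg.
have ef : f = (fun j => g j + (f j - g j)).
  by apply/funext => j; rewrite addrCA subrr addr0.
have hD : p n f <= p n g + p n (fun j => f j - g j).
  by rewrite {1}ef; exact: pD (bs_SB Sf Sg).
apply: le_trans hD _; rewrite lerD2l.
rewrite /bdist; apply: le_trans (pc n _ (bs_SB Sf Sg)) _.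
by apply: ler_wpM2r; [exact: bnorm_ge0 | exact: ler_norm].
Qed.

Lemma far_point a f n (rho : R) : S a -> S f -> nrm f <= 1 -> 0 < rho ->
  exists2 y, S y /\ dist y a <= rho & rho * p n f - p n a <= p n y.
Proof.
move=> Sa Sf nf r0; pose g := fun j => emb rho *: f j.
have Sg : S g by exact: bs_SZ.
have Sy : S (fun j => a j + g j) by exact: bs_SD.
have eya : (fun j => a j + g j - a j) = g.
  by apply/funext => j; rewrite addrC addKr.
exists (fun j => a j + g j).
  by split => //; rewrite /bdist eya bnormZ // gtr0_norm // ler_piMr // ltW.
have pg : p n g = rho * p n f by rewrite pZ // gtr0_norm.
have ega : (fun j => - a j + (a j + g j)) = g by apply/funext => j; rewrite addKr.
have := pD n _ _ (bs_SN Sa) Sy; rewrite pN // ega pg; lra.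
Qed.

Lemma ball_step a (M r : R) k :
  (forall C, exists f n, [/\ S f, nrm f <= 1 & C < p n f]) ->
  S a -> (forall n, p n a <= M) -> 0 < r -> exists a' (r' : R),
  [/\ S a', 0 < r', r' <= r / 2 /\ r' <= k.+1%:R^-1, dist a' a <= r / 2 &
      exists n, forall z, S z -> dist z a' <= r' -> k%:R < p n z].
Proof.
move=> unb Sa hM r0; have r20 : 0 < r / 2 by rewrite divr_gt0.
have [f [n [Sf nf hf]]] := unb ((k.+1%:R + M) / (r / 2)).
have [y [Sy hya] hy] := far_point _ _ n _ Sa Sf nf r20.
have ky : k.+1%:R < p n y.
  move: hf; rewrite ltr_pdivrMr // => hf; have := hM n; lra.
pose delta := (`|c n| + 1)^-1.
have d0 : 0 < delta by rewrite invr_gt0 ltr_pwDr // normr_ge0.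
pose r' := Num.min (r / 2) (Num.min delta k.+1%:R^-1).
have r'0 : 0 < r' by rewrite !lt_min r20 d0 invr_gt0 ltr0n.
exists y, r'; split => //; first by split; rewrite !ge_min lexx /= ?orbT.
exists n => z Sz hz.
have hcz : `|c n| * dist y z < 1.
  have dz : dist y z <= delta by rewrite bdist_sym //; apply: le_trans hz _;
    rewrite !ge_min lexx /= ?orbT.
  apply: (le_lt_trans (ler_wpM2l (normr_ge0 _) dz)).
  by rewrite /delta ltr_pdivrMr ?mul1r ?ltrDl // ltr_pwDr // normr_ge0.
have := p_lipschitz n _ _ Sy Sz; rewrite -natr1 in ky; lra.
Qed.

(** Otherwise [ball_step] yields nested balls on which [p n > k] for
    some [n], and their common point contradicts pointwise boundedness. *)
Lemma uniform_bound : (forall f, S f -> exists M, forall n, p n f <= M) ->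
  exists C, forall f, S f -> nrm f <= 1 -> forall n, p n f <= C.
Proof.
move=> pb; apply: contrapT => nC.
have unb C : exists f n, [/\ S f, nrm f <= 1 & C < p n f].
  apply: contrapT => h; apply: nC; exists C => f Sf nf n.
  by rewrite leNgt; apply/negP => lt; apply: h; exists f, n.
have st (ark : ((nat -> D) * R) * nat) : exists ar' : (nat -> D) * R,
    S ark.1.1 -> 0 < ark.1.2 -> [/\ S ar'.1, 0 < ar'.2,
      ar'.2 <= ark.1.2 / 2 /\ ar'.2 <= ark.2.+1%:R^-1,
      dist ar'.1 ark.1.1 <= ark.1.2 / 2 &
      exists n, forall z, S z -> dist z ar'.1 <= ar'.2 -> ark.2%:R < p n z].
  case: ark => [[a r] k] /=; case: (pselect (S a /\ 0 < r)) => [[Sa r0]|nh].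
    have [M hM] := pb a Sa.
    by have [a' [r' h]] := ball_step _ _ _ k unb Sa hM r0; exists (a', r').
  by exists (a, r) => Sa r0; exfalso; apply: nh.
have [F hF] := choice st.
pose A := fix A (k : nat) : (nat -> D) * R :=
  if k is k'.+1 then F (A k', k') else ((fun _ => 0), 1).
have inv k : S (A k).1 /\ 0 < (A k).2.
  elim: k => [|k [Sk rk]]; first by split => //; exact: bs_S0.
  by have [] := hF (A k, k) Sk rk.
have hk k := hF (A k, k) (inv k).1 (inv k).2.
have [y Sy hy] : exists2 y, S y & forall k, dist y (A k).1 <= (A k).2.
  apply: (nested_balls (fun k => (A k).1) (fun k => (A k).2)).
  - by move=> k; exact: (inv k).1.
  - by move=> k; exact: ltW (inv k).2.
  - by move=> k /=; have [_ _ [h _] h' _] := hk k; lra.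
  move=> e e0; have [k hk'] := nat_inv_lt _ e0; exists k.+1.
  by have [_ _ [_ h] _ _] := hk k; exact: le_lt_trans h hk'.
have [My hMy] := pb y Sy.
pose k := (Num.truncn My).+1; have kM : My < k%:R := truncnS_gt My.
have [_ _ _ _ [n hn]] := hk k.
by have := hn y Sy (hy k.+1); have := hMy n; lra.
Qed.

End UniformBoundedness.
End BanachSubspace.

Section DualSequenceClass.
Variables (X : seq_class_carrier K) (Xn : seq_class_norm K)
  (E D : completeNormedModType K) (ev : D -> E -> K).
Hypotheses (HX : is_sequence_class X Xn) (Hsph : spherically_complete X Xn)
  (Hdual : is_dual ev).
Hypothesis unimod : forall z : K, exists l, `|l| = 1 /\ l * z = `|z|.
Hypothesis Kcauchy : forall u : nat -> K, (forall e : R, 0 < e ->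
  exists N, forall n, (N <= n)%N -> nR (u N - u n) < e) -> cvgn u.
Hypothesis norming : forall (V : normedModType K) (x0 : V), exists f : V -> K,
  [/\ (forall a x y, f (a *: x + y) = a * f x + f y),
      (forall x, `|f x| <= `|x|) & f x0 = `|x0|].

Lemma evL d a x y : ev d (a *: x + y) = a * ev d x + ev d y.
Proof. by case: Hdual => h _ _ _; exact: h. Qed.
Lemma evLd a d d' x : ev (a *: d + d') x = a * ev d x + ev d' x.
Proof. by case: Hdual => _ h _ _; exact: h. Qed.

Lemma evD d x y : ev d (x + y) = ev d x + ev d y.
Proof. by have := evL d 1 x y; rewrite scale1r mul1r. Qed.
Lemma ev0 d : ev d 0 = 0.
Proof. by apply: (addrI (ev d 0)); rewrite -evD !addr0. Qed.
Lemma evZ d a x : ev d (a *: x) = a * ev d x.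
Proof. by have := evL d a x 0; rewrite addr0 ev0 addr0. Qed.
Lemma evB d x y : ev d (x - y) = ev d x - ev d y.
Proof. by rewrite evD -scaleN1r evZ mulN1r. Qed.
Lemma evDd d d' x : ev (d + d') x = ev d x + ev d' x.
Proof. by have := evLd 1 d d' x; rewrite scale1r mul1r. Qed.
Lemma ev0d x : ev 0 x = 0.
Proof. by apply: (addrI (ev 0 x)); rewrite -evDd !addr0. Qed.
Lemma evZd a d x : ev (a *: d) x = a * ev d x.
Proof. by have := evLd a d 0 x; rewrite addr0 ev0d addr0. Qed.
Lemma evNd d x : ev (- d) x = - ev d x.
Proof. by rewrite -scaleN1r evZd mulN1r. Qed.

Lemma evbound d x : nR (ev d x) <= nR `|d| * nR `|x|.
Proof.
rewrite -lee rmorphM -!normV -normE.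
have [->|x0] := eqVneq x 0; first by rewrite ev0 !normr0 mulr0.
have nx0 : 0 < `|x| by rewrite normr_gt0.
pose y := `|x|^-1 *: x.
have ny : `|y| <= 1 by rewrite normrZ normfV normr_id mulVf // gt_eqF.
have hy : `|ev d y| <= `|d|.
  by case: Hdual => _ _ /(_ d) [h _] _; apply: h; exists y.
have -> : ev d x = `|x| * ev d y by rewrite /y evZ mulrA mulfV ?gt_eqF // mul1r.
by rewrite normrM normr_id mulrC ler_wpM2r.
Qed.

Lemma bsX : banach_subspace (X D) (Xn D). Proof. by case: (HX D). Qed.

Lemma Xsingle d j : X D (single d j).
Proof.
case: (HX D) => _ c00X _ _; apply: c00X; exists j.+1 => n jn; rewrite /single.
by case: eqP => // e; rewrite e ltnn in jn.
Qed.

Lemma coord_le_Xn phi j : X D phi -> nR `|phi j| <= bnorm (Xn D) phi.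
Proof.
case: (HX D) => _ _ coordX _ Xphi.
by rewrite -lee -normV -(bs_Nemb bsX Xphi); exact: coordX.
Qed.

Definition dual_ball := [set phi : nat -> D | X D phi /\ bnorm (Xn D) phi <= 1].

Definition ps (x : nat -> E) (phi : nat -> D) : nat -> R :=
  series (fun j => nR (ev (phi j) (x j))).

Definition pairing x phi := limn (ps x phi).

Lemma ps_nd x phi : {homo ps x phi : n m / (n <= m)%N >-> n <= m}.
Proof.
by move=> n m nm; apply: nondecreasing_series => // k _ _; exact: nR_ge0.
Qed.

(** Spherical completeness turns convergence of [sum phi_j(x_j)] into
    absolute convergence: rotate each [phi_j] by the phase of [phi_j(x_j)]. *)
Lemma absconv {x phi} : Xdual X ev x -> X D phi ->
  [/\ cvgn (ps x phi), cvgn (series (fun j => `|ev (phi j) (x j)|)) &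
      limn (series (fun j => `|ev (phi j) (x j)|)) = emb (pairing x phi)].
Proof.
move=> Xx Xphi.
have [l hl] := choice (fun j => unimod (ev (phi j) (x j))).
pose psi := fun j => l j *: phi j.
have [Xpsi _] := Hsph D phi l Xphi (fun j => (hl j).1).
have cv := Xx psi Xpsi.
have e1 : (fun j => ev (psi j) (x j)) = emb \o (fun j => nR (ev (phi j) (x j))).
  by apply/funext => j; rewrite /psi /= evZd (hl j).2 normE.
have e2 : (fun j => `|ev (phi j) (x j)|) = emb \o (fun j => nR (ev (phi j) (x j))).
  by apply/funext => j; rewrite /= normE.
rewrite e1 emb_series in cv.
have [L [hL _]] := emb_cvg_inv cv.
have cps : cvgn (ps x phi) by rewrite /ps; exact: cvgP hL.
rewrite e2 emb_series; have h := emb_cvg cps.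
split; [exact: cps|exact: (cvgP _ h)|].
exact: (cvg_lim (@norm_hausdorff _ _) h).
Qed.

Lemma ps_le_pairing {x phi} n : Xdual X ev x -> X D phi ->
  ps x phi n <= pairing x phi.
Proof.
move=> Xx Xphi; have [c _ _] := absconv Xx Xphi.
exact: nondecreasing_cvgn_le (@ps_nd x phi) c n.
Qed.

Lemma pairing_le {x phi t} : Xdual X ev x -> X D phi ->
  (forall n, ps x phi n <= t) -> pairing x phi <= t.
Proof.
move=> Xx Xphi h; have [c _ _] := absconv Xx Xphi.
by apply: limr_le => //; apply: nearW.
Qed.

Lemma dual_ball0 : dual_ball (fun _ => 0).
Proof. by split; [exact: bs_S0 bsX|rewrite /bnorm (bs_NS0 bsX) nR0 ler01]. Qed.

Lemma pairing0 {x} : Xdual X ev x -> pairing x (fun _ => 0) = 0.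
Proof.
move=> Xx; have ps0 n : ps x (fun _ => 0) n = 0.
  by rewrite /ps /series /= big1 // => j _; rewrite ev0d nR0.
apply/le_anti; apply/andP; split.
  by apply: pairing_le => // [|n]; [exact: bs_S0 bsX|rewrite ps0].
by rewrite -(ps0 0); apply: ps_le_pairing => //; exact: bs_S0 bsX.
Qed.

(** The pairings with the unit ball are bounded: the partial sums are a
    pointwise bounded family of continuous seminorms on [X(E')]. *)
Lemma pairing_bounded {x} : Xdual X ev x ->
  exists C, forall phi, dual_ball phi -> pairing x phi <= C.
Proof.
move=> Xx.
pose p := fun n phi => ps x phi n.
pose c := fun n => \sum_(0 <= j < n) nR `|x j|.
have pD n f g : X D f -> X D g -> p n (fun j => f j + g j) <= p n f + p n g.
  move=> Xf Xg; rewrite /p /ps /series /= -big_split /=.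
  by apply: ler_sum => j _; rewrite evDd; exact: nRD.
have pN n f : X D f -> p n (fun j => - f j) = p n f.
  move=> Xf; rewrite /p /ps /series /=.
  by apply: eq_bigr => j _; rewrite evNd nRN.
have pZ n t f : X D f -> p n (fun j => emb t *: f j) = `|t| * p n f.
  move=> Xf; rewrite /p /ps /series /= mulr_sumr.
  by apply: eq_bigr => j _; rewrite evZd nRM nR_emb.
have pc n f : X D f -> p n f <= c n * bnorm (Xn D) f.
  move=> Xf; rewrite /p /c /ps /series /= mulr_suml; apply: ler_sum => j _.
  apply: (le_trans (evbound _ _)); rewrite mulrC.
  by apply: ler_wpM2l; [exact: nR_ge0|exact: coord_le_Xn].
have pb f : X D f -> exists M, forall n, p n f <= M.
  by move=> Xf; exists (pairing x f) => n; exact: ps_le_pairing.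
have [C hC] := uniform_bound bsX p c pD pN pZ pc pb.
by exists C => phi [Xphi nphi]; apply: pairing_le => // n; exact: hC.
Qed.

Definition dnorm x := sup [set pairing x phi | phi in dual_ball].

Lemma dnorm_has {x} : Xdual X ev x -> has_sup [set pairing x phi | phi in dual_ball].
Proof.
move=> Xx; split; first by exists (pairing x (fun _ => 0)), (fun _ => 0); first exact: dual_ball0.
by have [C hC] := pairing_bounded Xx; exists C => _ [phi bphi <-]; exact: hC.
Qed.

Lemma dnorm_ub {x phi} : Xdual X ev x -> dual_ball phi -> pairing x phi <= dnorm x.
Proof.
by move=> Xx bphi; apply: sup_upper_bound; [exact: dnorm_has|exists phi].
Qed.

Lemma ps_le_dnorm {x phi} n : Xdual X ev x -> dual_ball phi -> ps x phi n <= dnorm x.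
Proof.
by move=> Xx bphi; apply: le_trans (ps_le_pairing _ Xx bphi.1) (dnorm_ub Xx bphi).
Qed.

Lemma dnorm_le {x t} : Xdual X ev x ->
  (forall phi, dual_ball phi -> forall n, ps x phi n <= t) -> dnorm x <= t.
Proof.
move=> Xx h; apply: ge_sup; first by exact: (dnorm_has Xx).1.
by move=> _ [phi bphi <-]; apply: pairing_le (bphi.1) _ => //; exact: h.
Qed.

Lemma dnorm_ge0 {x} : Xdual X ev x -> 0 <= dnorm x.
Proof. by move=> Xx; rewrite -(pairing0 Xx); apply: dnorm_ub => //; exact: dual_ball0. Qed.

Lemma dnorm_lub {x} : Xdual X ev x -> is_lub (dual_sums X Xn ev x) (emb (dnorm x)).
Proof.
move=> Xx; have unit_ball_nR phi : X D phi -> (Xn D phi <= 1) = (bnorm (Xn D) phi <= 1).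
  by move=> Xphi; rewrite (bs_Nemb bsX Xphi) -(rmorph1 emb) lee.
split.
  move=> _ [phi [Xphi nphi] <-].
  have [_ _ ->] := absconv Xx Xphi; rewrite lee; apply: dnorm_ub => //.
  by split => //; rewrite -(unit_ball_nR _ Xphi).
move=> t ht.
have t0 : 0 <= t.
  apply: ht; exists (fun _ => 0); first by split; [exact: bs_S0 bsX|rewrite (bs_NS0 bsX) ler01].
  by have [_ _ ->] := absconv Xx (bs_S0 bsX); rewrite (pairing0 Xx) rmorph0.
rewrite (ge0_emb t0) lee; apply: dnorm_le => // phi [Xphi nphi] n.
apply: le_trans (ps_le_pairing _ Xx Xphi) _.
rewrite -lee -(ge0_emb t0); apply: ht; exists phi; first by split; rewrite ?unit_ball_nR.
by have [_ _ ->] := absconv Xx Xphi.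
Qed.

Lemma dual_norm_dnorm {x} : Xdual X ev x -> dual_norm X Xn ev x = emb (dnorm x).
Proof.
move=> Xx; rewrite /dual_norm; case: pselect => [h|nh].
  case: cid => s /= [s_ub s_lub]; have [d_ub d_lub] := dnorm_lub Xx.
  by apply/le_anti; rewrite s_lub ?d_lub.
by exfalso; apply: nh; exists (emb (dnorm x)); exact: dnorm_lub.
Qed.

Lemma Xdual0 : Xdual X ev (fun _ => 0).
Proof.
move=> phi Xphi.
have -> : (fun j => ev (phi j) 0) = (fun _ => 0) by apply/funext => j; rewrite ev0.
have -> : series (fun _ : nat => (0 : K)) = (fun _ => 0).
  by apply/funext => n; rewrite /series /= big1.
exact: (cvgP _ (cvg_cst _)).
Qed.

Lemma XdualD {x y} : Xdual X ev x -> Xdual X ev y -> Xdual X ev (fun j => x j + y j).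
Proof.
move=> Xx Xy phi Xphi.
have -> : (fun j => ev (phi j) (x j + y j)) =
    (fun j => ev (phi j) (x j)) + (fun j => ev (phi j) (y j)).
  by apply/funext => j /=; rewrite evD.
by rewrite seriesD; apply: is_cvgD; [exact: Xx|exact: Xy].
Qed.

Lemma XdualZ a {x} : Xdual X ev x -> Xdual X ev (fun j => a *: x j).
Proof.
move=> Xx phi Xphi.
have -> : (fun j => ev (phi j) (a *: x j)) = a *: (fun j => ev (phi j) (x j)).
  by apply/funext => j /=; rewrite evZ.
by rewrite seriesZ; apply: is_cvgZl_tmp; exact: Xx.
Qed.

Lemma XdualB {x y} : Xdual X ev x -> Xdual X ev y -> Xdual X ev (fun j => x j - y j).
Proof.
move=> Xx Xy; have := XdualD Xx (XdualZ (-1) Xy).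
by congr (Xdual _ _ _); apply/funext => j; rewrite scaleN1r.
Qed.

Lemma dnormD {x y} : Xdual X ev x -> Xdual X ev y ->
  dnorm (fun j => x j + y j) <= dnorm x + dnorm y.
Proof.
move=> Xx Xy; apply: dnorm_le; first exact: XdualD.
move=> phi bphi n; apply: le_trans (_ : ps x phi n + ps y phi n <= _); last first.
  by apply: lerD; exact: ps_le_dnorm.
rewrite /ps /series /= -big_split /=; apply: ler_sum => j _.
by rewrite evD; exact: nRD.
Qed.

Lemma psZ a x phi n : ps (fun j => a *: x j) phi n = nR a * ps x phi n.
Proof.
by rewrite /ps /series /= mulr_sumr; apply: eq_bigr => j _; rewrite evZ nRM.
Qed.

Lemma dnormZ a {x} : Xdual X ev x -> dnorm (fun j => a *: x j) = nR a * dnorm x.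
Proof.
move=> Xx; have Xax := XdualZ a Xx; have a0 := nR_ge0 a.
apply/le_anti; apply/andP; split.
  apply: dnorm_le => // phi bphi n; rewrite psZ.
  by apply: ler_wpM2l => //; exact: ps_le_dnorm.
have [->|an0] := eqVneq (nR a) 0; first by rewrite mul0r; exact: dnorm_ge0.
have ap : 0 < nR a by rewrite lt_def an0.
rewrite mulrC -ler_pdivlMr //; apply: dnorm_le => // phi bphi n.
by rewrite ler_pdivlMr // mulrC -psZ; exact: ps_le_dnorm.
Qed.

Lemma lin_cont (f : E -> K) : (forall a x y, f (a *: x + y) = a * f x + f y) ->
  (forall x, `|f x| <= `|x|) -> continuous f.
Proof.
move=> lin bnd.
have fD u v : f (u + v) = f u + f v by rewrite -[u in LHS]scale1r lin mul1r.
have f0 : f 0 = 0 by apply: (addrI (f 0)); rewrite -fD !addr0.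
have fN u : f (- u) = - f u.
  by rewrite -scaleN1r -[_ *: u]addr0 lin f0 addr0 mulN1r.
have fB u v : f u - f v = f (u - v) by rewrite fD fN.
move=> z; apply/cvgrPdist_lt => e e0.
near=> w; rewrite fB; apply: le_lt_trans (bnd _) _.
near: w; exact: (@cvgr_dist_lt _ _ _ (nbhs z) _ (fun w : E => w) z cvg_id e e0).
Unshelve. all: by end_near.
Qed.

(** The embedding into [l_infty(E)]: test [x] against a norming functional
    of [x_j] placed at coordinate [j]. *)
Lemma coord_le_dnorm {x} j : Xdual X ev x -> nR `|x j| <= dnorm x.
Proof.
move=> Xx.
have [f [lin bnd fx]] := norming _ (x j).
have [d hd] : exists d, forall y, ev d y = f y.
  by case: Hdual => _ _ _; apply; [exact: lin|exact: lin_cont].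
have bphi : dual_ball (single d j).
  split; first exact: Xsingle.
  case: (HX D) => _ _ _ sing; rewrite /bnorm sing -nR_ler rmorph1 normr_id.
  case: Hdual => _ _ /(_ d) [_ d_lub] _; apply: d_lub => _ [y /= hy <-].
  by rewrite hd; apply: le_trans (bnd y) hy.
have <- : ps x (single d j) j.+1 = nR `|x j|.
  rewrite /ps /series /= big_nat_recr //= /single eqxx big_nat_cond big1 ?add0r.
    by rewrite hd fx.
  by move=> i /andP[/andP[_ ij] _]; rewrite (ltn_eqF ij) ev0d nR0.
exact: ps_le_dnorm.
Qed.

Lemma dnorm_eq0 {x} : Xdual X ev x -> dnorm x = 0 -> x = (fun _ => 0).
Proof.
move=> Xx h; apply/funext => j; have := coord_le_dnorm j Xx; rewrite h => h'.
have : nR `|x j| = 0 by apply/le_anti; rewrite h' nR_ge0.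
by move/nR_eq0/normr0_eq0.
Qed.

Lemma ps_limit_le (s : nat -> (nat -> E)) y x phi k (e : R) :
  (forall j, (fun n => s n j) @ \oo --> y j) -> dual_ball phi ->
  (exists M, forall m, (M <= m)%N -> ps (fun j => x j - s m j) phi k <= e) ->
  ps (fun j => x j - y j) phi k <= e.
Proof.
move=> ys [Xphi nphi] [M hM]; apply/ler_addgt0Pr => dl dl0.
pose dl' := dl / k.+1%:R.
have dl'0 : 0 < dl' by rewrite divr_gt0 // ltr0n.
have : \forall m \near \oo, forall i : 'I_k, nR `|y i - s m i| < dl'.
  by apply: filter_forall => i; exact: (cvgVP (fun n => s n i) (y i)).1 (ys i) dl' dl'0.
move=> [N _ hN]; pose m := maxn N M.
have hm : forall i : 'I_k, nR `|y i - s m i| < dl' := hN m (leq_maxl N M).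
have split_ps : ps (fun j => x j - y j) phi k <=
    ps (fun j => x j - s m j) phi k + \sum_(0 <= i < k) nR (ev (phi i) (s m i - y i)).
  rewrite /ps /series /= -big_split /=; apply: ler_sum => j _.
  have -> : x j - y j = (x j - s m j) + (s m j - y j) by rewrite addrA subrK.
  by rewrite (evD (phi j) (x j - s m j)); exact: nRD.
have tail : \sum_(0 <= i < k) nR (ev (phi i) (s m i - y i)) <= dl.
  apply: le_trans (_ : \sum_(i < k) dl' <= dl); last first.
    rewrite sumr_const card_ord -mulr_natl mulrA ler_pdivrMr ?ltr0n //.
    by rewrite mulrC ler_pM2l // ler_nat.
  rewrite big_mkord; apply: ler_sum => i _; apply: le_trans (evbound _ _) _.
  have := le_trans (coord_le_Xn _ i Xphi) nphi.
  have := hm i; rewrite -normrN opprB => h h'.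
  have := nR_ge0 `|s m i - y i|; have := nR_ge0 `|phi i|; nra.
have := hM m (leq_maxr N M); lra.
Qed.

(** A sequence whose distance (measured by the partial sums) to an element
    of [X^dual(E)] is bounded lies in [X^dual(E)]: the difference has
    absolutely convergent pairings. *)
Lemma Xdual_perturb x z (C : R) : Xdual X ev x ->
  (forall phi, dual_ball phi -> forall k, ps (fun j => x j - z j) phi k <= C) ->
  Xdual X ev z.
Proof.
move=> Xx hC phi Xphi.
pose c := bnorm (Xn D) phi + 1.
have c0 : 0 < c by rewrite /c ltr_pwDr // nR_ge0.
pose phi' := fun j => emb c^-1 *: phi j.
have bphi' : dual_ball phi'.
  split; first exact: (bs_SZ bsX).
  rewrite (bnormZ bsX _ Xphi) gtr0_norm ?invr_gt0 //.
  by rewrite ler_pdivrMl // mulr1 /c lerDl.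
pose w := fun j => ev (phi j) (x j - z j).
have cw : cvgn (series w).
  apply: (abs_cvg Kcauchy); exists (c * C) => k.
  have := hC phi' bphi' k.
  have -> : ps (fun j => x j - z j) phi' k = c^-1 * series (fun j => nR (w j)) k.
    rewrite /ps /series /= mulr_sumr; apply: eq_bigr => j _.
    by rewrite /phi' /w evZd nRM nR_emb gtr0_norm // invr_gt0.
  by rewrite ler_pdivrMl.
have -> : (fun j => ev (phi j) (z j)) = (fun j => ev (phi j) (x j)) - w.
  apply/funext => j; rewrite /w.
  change (ev (phi j) (z j) = ev (phi j) (x j) - ev (phi j) (x j - z j)).
  by rewrite evB opprB addrC subrK.
by rewrite seriesD seriesN; apply: is_cvgB => //; exact: Xx.
Qed.

(** Completeness: a Cauchy sequence converges coordinatewise (by the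
    embedding into [l_infty(E)]); the limit is in [X^dual(E)] by
    [Xdual_perturb], and is the limit in norm by [ps_limit_le]. *)
Lemma Xdual_complete (s : nat -> (nat -> E)) : (forall n, Xdual X ev (s n)) ->
  (forall e : K, 0 < e -> exists M, forall m n, (M <= m)%N -> (M <= n)%N ->
     dual_norm X Xn ev (fun j => s m j - s n j) < e) ->
  exists2 y, Xdual X ev y & forall e : K, 0 < e -> exists M, forall n, (M <= n)%N ->
     dual_norm X Xn ev (fun j => s n j - y j) < e.
Proof.
move=> Xs hC.
have XsB m n : Xdual X ev (fun j => s m j - s n j) := XdualB (Xs m) (Xs n).
have hCR (e : R) : 0 < e -> exists M, forall m n, (M <= m)%N -> (M <= n)%N ->
    dnorm (fun j => s m j - s n j) < e.
  move=> e0; have e0' : 0 < emb e by rewrite emb_gt0.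
  have [M hM] := hC (emb e) e0'; exists M => m n Mm Mn.
  by have := hM m n Mm Mn; rewrite dual_norm_dnorm // lte.
have cs j : cvgn (fun n => s n j).
  apply: seq_cauchy_cvg => e e0; have [M hM] := hC e e0.
  exists M => n Mn; apply: le_lt_trans (hM M n (leqnn M) Mn).
  rewrite dual_norm_dnorm // normV lee; exact: (coord_le_dnorm j (XsB M n)).
pose y := fun j => limn (fun n => s n j).
have ys j : (fun n => s n j) @ \oo --> y j := cs j.
have close (e : R) : 0 < e -> exists M, forall n, (M <= n)%N ->
    forall phi, dual_ball phi -> forall k, ps (fun j => s n j - y j) phi k <= e.
  move=> e0; have [M hM] := hCR e e0; exists M => n Mn phi bphi k.
  apply: (ps_limit_le _ _ _ _ _ _ ys bphi); exists M => m Mm.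
  exact: le_trans (ps_le_dnorm _ (XsB n m) bphi) (ltW (hM n m Mn Mm)).
have Xy : Xdual X ev y.
  by have [M hM] := close 1 ltr01; exact: Xdual_perturb (Xs M) (hM M (leqnn M)).
exists y => // e e0.
have e2 : 0 < nR e / 2 by rewrite divr_gt0 // nR_gt0.
have [M hM] := close _ e2; exists M => n Mn.
have XB := XdualB (Xs n) Xy.
rewrite dual_norm_dnorm // (ge0_emb (ltW e0)) lte.
have : dnorm (fun j => s n j - y j) <= nR e / 2.
  by apply: dnorm_le => [|phi bphi k]; [exact: XdualB|exact: hM].
by have := nR_gt0 e0; lra.
Qed.

Theorem dual_sequence_class :
  [/\ (forall x, Xdual X ev x ->
         (forall phi : nat -> D, X D phi -> Xn D phi <= 1 ->
            cvgn (series (fun j => `|ev (phi j) (x j)|))) /\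
         exists s, is_lub (dual_sums X Xn ev x) s),
      banach_subspace (Xdual X ev) (dual_norm X Xn ev) &
      (forall x, Xdual X ev x -> forall j, `|x j| <= dual_norm X Xn ev x)].
Proof.
split.
- move=> x Xx; split; last by exists (emb (dnorm x)); exact: dnorm_lub.
  by move=> phi Xphi _; have [] := absconv Xx Xphi.
- split; first exact: Xdual0.
  split; first by move=> x y; exact: XdualD.
  split; first by move=> a x; exact: XdualZ.
  split; first by move=> x Xx; rewrite dual_norm_dnorm // emb_ge0; exact: dnorm_ge0.
  split.
    by move=> x Xx; rewrite dual_norm_dnorm // -(rmorph0 emb) => /emb_inj; exact: dnorm_eq0.
  split.
    move=> x y Xx Xy; rewrite !dual_norm_dnorm //; last exact: XdualD.
    by rewrite -rmorphD lee; exact: dnormD.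
  split; last exact: Xdual_complete.
  move=> a x Xx; rewrite !dual_norm_dnorm //; last exact: XdualZ.
  by rewrite dnormZ // rmorphM -normE.
- by move=> x Xx j; rewrite dual_norm_dnorm // normV lee; exact: coord_le_dnorm.
Qed.

End DualSequenceClass.
End RealValuedNorm.

Lemma phase {K : numFieldType} (z : K) : exists l : K, `|l| = 1 /\ l * z = `|z|.
Proof.
have [->|z0] := eqVneq z 0; first by exists 1; rewrite normr1 mul1r normr0.
exists (`|z| / z); split; last by rewrite mulfVK.
by rewrite normrM normfV normr_id mulfV // normr_eq0.
Qed.

Section RealScalars.
Variable R : realType.

Lemma norming_real (V : normedModType R) (x0 : V) : exists f : V -> R,
  [/\ (forall a x y, f (a *: x + y) = a * f x + f y),
      (forall x, `|f x| <= `|x|) & f x0 = `|x0|].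
Proof.
have [g [gD gZ gp gx]] := @real_hahn_banach R V (fun r x => r *: x)
  (fun r x y => scalerDr r x y) (fun r s x => scalerDl x r s)
  (fun r s x => scalerA r s x) (fun x => scale1r x)
  (fun x => `|x|) (fun x y => ler_normD x y) (fun r x => normrZ r x) x0.
exists g; split => //; first by move=> a x y; rewrite gD gZ.
move=> x; rewrite ler_norml gp andbT.
by have := gp (- x); rewrite normrN -scaleN1r gZ mulN1r lerNl.
Qed.

Lemma cauchy_real (u : nat -> R) : (forall e : R, 0 < e ->
  exists N, forall n, (N <= n)%N -> `|u N - u n| < e) -> cvgn u.
Proof. by move=> hu; apply: seq_cauchy_cvg => e e0; exact: hu. Qed.

End RealScalars.

(** Complex scalars: [nC z] is the real number [|z|]; Hahn-Banach follows
    from the real case applied to the underlying real space. *)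
Section ComplexScalars.
Variable R : realType.
Local Open Scope complex_scope.

Definition nC (z : R[i]) : R := complex.Re `|z|.

Lemma normC_re (z : R[i]) : `|z| = (nC z)%:C.
Proof. by rewrite /nC normc_def. Qed.

Lemma normCR (r : R) : `|r%:C| = `|r|%:C.
Proof. by rewrite normc_def /= expr0n addr0 sqrtr_sqr. Qed.

Lemma nC_ge0 z : 0 <= nC z.
Proof. by rewrite -ler0c -normC_re. Qed.

Lemma nC_sqr (z : R[i]) : nC z ^+ 2 = complex.Re z ^+ 2 + complex.Im z ^+ 2.
Proof.
have h := add_Re2_Im2 z; rewrite normC_re -rmorphXn in h.
by apply: complexI; rewrite h.
Qed.

Lemma Re_le z : `|complex.Re z| <= nC z.
Proof.
have := nC_sqr z; have := nC_ge0 z; have := normr_ge0 (complex.Re z).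
have := real_normK (num_real (complex.Re z)); nra.
Qed.

Lemma Im_le z : `|complex.Im z| <= nC z.
Proof.
have := nC_sqr z; have := nC_ge0 z; have := normr_ge0 (complex.Im z).
have := real_normK (num_real (complex.Im z)); nra.
Qed.

Lemma nC_le z : nC z <= `|complex.Re z| + `|complex.Im z|.
Proof.
have := nC_sqr z; have := nC_ge0 z; have := normr_ge0 (complex.Im z).
have := normr_ge0 (complex.Re z).
have := real_normK (num_real (complex.Im z)).
have := real_normK (num_real (complex.Re z)); nra.
Qed.

(** [R[i]] is complete: real and imaginary parts are Cauchy. *)
Lemma cauchy_complex (u : nat -> scal R true) : (forall e : R, 0 < e ->
    exists N, forall n, (N <= n)%N -> nC (u N - u n) < e) -> cvgn u.
Proof.
move=> hu.
have cre : cvgn (fun n => complex.Re (u n)).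
  apply: seq_cauchy_cvg => e e0; have [N hN] := hu e e0; exists N => n Nn.
  apply: le_lt_trans (hN n Nn); apply: le_trans (Re_le _).
  by case: (u N) => a b; case: (u n) => c d.
have cim : cvgn (fun n => complex.Im (u n)).
  apply: seq_cauchy_cvg => e e0; have [N hN] := hu e e0; exists N => n Nn.
  apply: le_lt_trans (hN n Nn); apply: le_trans (Im_le _).
  by case: (u N) => a b; case: (u n) => c d.
pose l : scal R true :=
  limn (fun n => complex.Re (u n)) +i* limn (fun n => complex.Im (u n)).
apply: (cvgP l).
apply/(@cvgKP R (scal R true) (real_complex R) (@lecR R) nC normC_re) => e e0.
have e20 : 0 < e / 2 by rewrite divr_gt0.
move/cvgrPdist_lt: cre => /(_ _ e20) cre.
move/cvgrPdist_lt: cim => /(_ _ e20) cim.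
near=> n; apply: le_lt_trans (nC_le _) _.
have h1 : `|limn (fun n => complex.Re (u n)) - complex.Re (u n)| < e / 2 by near: n.
have h2 : `|limn (fun n => complex.Im (u n)) - complex.Im (u n)| < e / 2 by near: n.
by move: h1 h2; case: (u n) => a b /= h1 h2; lra.
Unshelve. all: by end_near.
Qed.

(** Complexification: from an additive, real-homogeneous [g], the functional
    [f x = g x - i g(i x)] is complex-linear with real part [g]. *)
Lemma complexify {V : lmodType R[i]} {g : V -> R} :
  (forall x y, g (x + y) = g x + g y) -> (forall r x, g (r%:C *: x) = r * g x) ->
  exists f : V -> R[i], [/\ forall a x y, f (a *: x + y) = a * f x + f y,
    forall x, complex.Re (f x) = g x & forall x, complex.Im (f x) = - g ('i *: x)].
Proof.
move=> gD gZ; pose f x := (g x)%:C - 'i * (g ('i *: x))%:C.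
have fD x y : f (x + y) = f x + f y.
  by rewrite /f scalerDr !gD !rmorphD mulrDr opprD addrACA.
have fR r x : f (r%:C *: x) = r%:C * f x.
  have e : 'i *: (r%:C *: x) = r%:C *: ('i *: x) by rewrite !scalerA mulrC.
  by rewrite /f e !gZ; simpc.
have gN x : g (- x) = - g x.
  by have := gZ (-1) x; rewrite rmorphN1 scaleN1r mulN1r.
have fi x : f ('i *: x) = 'i * f x.
  have e2 : 'i *: ('i *: x) = - x by rewrite scalerA -expr2 sqr_i scaleN1r.
  by rewrite /f e2 gN; simpc.
exists f; split; [|by move=> x; rewrite /f; simpc|by move=> x; rewrite /f; simpc].
move=> a x y; rewrite fD; congr (_ + _).
rewrite [a]complexE scalerDl -scalerA fD fR fi fR.
by rewrite mulrDl mulrA.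
Qed.

Lemma norming_complex (V : normedModType R[i]) (x0 : V) : exists f : V -> R[i],
  [/\ (forall a x y, f (a *: x + y) = a * f x + f y),
      (forall x, `|f x| <= `|x|) & f x0 = `|x0|].
Proof.
pose p (x : V) := nC `|x|.
have pE x : `|x| = (p x)%:C by rewrite /p -normC_re normr_id.
have pD x y : p (x + y) <= p x + p y.
  rewrite -lecR (_ : (p x + p y)%:C = (p x)%:C + (p y)%:C); last by simpc.
  by rewrite -!pE; exact: ler_normD.
have pZ r x : p (r%:C *: x) = `|r| * p x.
  by apply: complexI; rewrite -pE normrZ normCR pE; simpc.
have [g [gD gZ gp gx]] := @real_hahn_banach R V (fun r x => r%:C *: x)
  (fun r x y => scalerDr _ x y)
  (fun r s x => etrans (congr1 (fun c => c *: x) (rmorphD _ r s)) (scalerDl x _ _))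
  (fun r s x => etrans (scalerA _ _ x) (congr1 (fun c => c *: x) (esym (rmorphM _ r s))))
  (fun x => etrans (congr1 (fun c => c *: x) (rmorph1 _)) (scale1r x))
  p pD pZ x0.
have [f [lin Ref Imf]] := complexify gD gZ.
have f0 : f 0 = 0.
  have h := lin 1 0 0; rewrite scale1r mul1r addr0 in h.
  by apply: (addrI (f 0)); rewrite addr0 -h.
have fl l x : f (l *: x) = l * f x by rewrite -[l *: x]addr0 lin f0 addr0.
(* [|f x|] is the real part of [f] at a rotation of [x] *)
have bnd x : `|f x| <= `|x|.
  have [l [l1 lf]] := phase (f x).
  have : nC (f x) <= p x.
    rewrite /nC -lf -fl Ref; apply: le_trans (gp _) _.
    by rewrite /p normrZ l1 mul1r.
  by rewrite normC_re pE lecR.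
exists f; split => //.
have hb := bnd x0; rewrite normC_re pE lecR in hb.
have hs := nC_sqr (f x0); rewrite Ref Imf gx in hs.
have px0 : 0 <= p x0 by exact: nC_ge0.
have t0 : g ('i *: x0) = 0.
  apply/eqP; rewrite -sqrf_eq0 eq_le sqr_ge0 andbT.
  by rewrite sqrrN in hs; have := nC_ge0 (f x0); nra.
by rewrite [f x0]complexE Ref Imf t0 oppr0 rmorph0 mulr0 addr0 gx pE.
Qed.

End ComplexScalars.

(** Both scalar fields have real-valued norms: for [R[i]] via [nC], for [R]
    with [emb] the identity and [nR] the absolute value. *)
Theorem proposition2p4 (R : realType) (b : bool)
  (X : seq_class_carrier (scal R b)) (Xn : seq_class_norm (scal R b))
  (HX : is_sequence_class X Xn) (Hsph : spherically_complete X Xn)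
  (E D : completeNormedModType (scal R b)) (ev : D -> E -> scal R b)
  (Hdual : is_dual ev) :
  [/\ (forall x, Xdual X ev x ->
         (forall phi : nat -> D, X D phi -> Xn D phi <= 1 ->
            cvgn (series (fun j => `|ev (phi j) (x j)|))) /\
         exists s, is_lub (dual_sums X Xn ev x) s),
      banach_subspace (Xdual X ev) (dual_norm X Xn ev) &
      (forall x, Xdual X ev x -> forall j, `|x j| <= dual_norm X Xn ev x)].
Proof.
destruct b.
- exact: (@dual_sequence_class R (scal R true) (real_complex R) (@lecR R) (@nC R)
    (@normC_re R) X Xn E D ev HX Hsph Hdual phase (@cauchy_complex R)
    (@norming_complex R)).
- exact: (@dual_sequence_class R R idfun (fun r s => erefl) (fun z => `|z|)
    (fun z => erefl) X Xn E D ev HX Hsph Hdual phase (@cauchy_real R)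
    (@norming_real R)).
Qed.
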